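(* Let $\beta=0$, $R\ge0$, $D>0$, and let $\alpha_\infty^D$ be the maximum value of $\alpha_0$ over all numerical walls for the Chern character $(-R,0,D,0)$ on $\mathbb{P}^3$. Then $D-2<\alpha_\infty^D\le D$.
   Context: On $\mathbb{P}^3$ with hyperplane class $H$, Chern characters are the vectors of coefficients of $1,H,H^2,H^3$. For the Chern character $v=(-R,0,D,0)$ and the Bayer–Macrì–Toda stability conditions $\sigma_{0,\alpha,s}$ ($\alpha,s>0$; central charge $Z=-(\operatorname{ch}_3-(s+\frac16)\alpha^2\operatorname{ch}_1)+\sqrt{-1}(\operatorname{ch}_2-\frac{\alpha^2}{2}\operatorname{ch}_0)$), a numerical wall is a curve $(s+\frac16)\alpha^2=\alpha_0^2/6$ with $\alpha_0^2=6e/c$, where $(r,c,d,e)=\operatorname{ch}(A)$ for some $A\in D^b(\mathbb{P}^3)$ with $c>0$ satisfying $0<d<D$, $0<c(6e)\le\min\{4d^2,4(D-d)^2\}$, and $-\frac{c(2D-2d)}{6e}-R\le r\le\frac{2cd}{6e}$. (Being the Chern character of an object forces in particular $r,c\in\mathbb{Z}$, $d-\frac{c^2}{2}\in\mathbb{Z}$, $2e-cd+\frac{c^3}{6}\in\mathbb{Z}$, $e-\frac c6\in\mathbb{Z}$.) *)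

From Stdlib Require Import Reals ZArith.
Open Scope R_scope.

(* Chern character of O(k) on P^3: (1, k, k^2/2, k^3/6). *)
(* Since K_0(P^3) is generated by the line bundles O, O(1), O(2),
   O(3) (Beilinson), the image of ch is the Z-span of ch(O(k)), k=0..3. *)
Definition is_ch (r c d e : R) : Prop :=
  exists a0 a1 a2 a3 : Z,
    r = IZR a0 + IZR a1 + IZR a2 + IZR a3 /\
    c = IZR a1 + 2 * IZR a2 + 3 * IZR a3 /\
    d = IZR a1 / 2 + IZR a2 * 4 / 2 + IZR a3 * 9 / 2 /\
    e = IZR a1 / 6 + IZR a2 * 8 / 6 + IZR a3 * 27 / 6.

Definition numerical_wall (Rk D : R) (r c d e : R) : Prop :=
  is_ch r c d e /\
  0 < c /\
  0 < d < D /\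
  0 < c * (6 * e) <= Rmin (4 * d ^ 2) (4 * (D - d) ^ 2) /\
  - (c * (2 * D - 2 * d)) / (6 * e) - Rk <= r <= 2 * c * d / (6 * e).

Definition wall_alpha0 (c e : R) : R := sqrt (6 * e / c).

(** Writing [D = ch_2] (an integer, since [ch_1 = 0]), every wall has
    [c] and [6e] positive integers with [c * 6e <= D^2], because
    [min (4d^2, 4(D-d)^2) <= D^2] for [0 < d < D].  Hence [alpha_0^2 = 6e/c <= D^2]
    and there are only finitely many walls up to [(c, e)], so the maximum exists
    and is at most [D].  For the lower bound take [c = 1], [d = p + 1/2] with
    [2p + 1 <= D <= 2p + 2], and [6e - 1] the largest multiple of [6] below
    [4d^2 = (2p+1)^2]: then [alpha_0^2 = 6e > 4p^2 >= (D-2)^2] once [p >= 1],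
    and [D <= 2] is trivial. *)

From Stdlib Require Import Reals ZArith.
From Stdlib Require Import Lra Lia Psatz List Classical.
Open Scope R_scope.

Lemma ex_argmax_in_list {A : Type} (P : A -> Prop) (f : A -> R) (L : list A) :
  (exists x, In x L /\ P x) ->
  exists x, In x L /\ P x /\ forall y, In y L -> P y -> f y <= f x.
Proof.
  induction L as [|a L IH]; intros [x [Hx Px]]; [destruct Hx|].
  destruct (classic (exists y, In y L /\ P y)) as [HL|HL].
  - destruct (IH HL) as [m [Hm [Pm Mm]]].
    destruct (classic (P a /\ f m <= f a)) as [[Pa Ham]|Hma].
    + exists a; split; [left; reflexivity | split; [exact Pa |]].
      intros y [<-|Hy] Py; [lra | specialize (Mm y Hy Py); lra].
    + exists m; split; [right; exact Hm | split; [exact Pm |]].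
      intros y [<-|Hy] Py; [| exact (Mm y Hy Py)].
      apply Rnot_lt_le; intro Hlt; apply Hma; split; [exact Py | lra].
  - destruct Hx as [<-|Hx]; [| exfalso; apply HL; eauto].
    exists a; split; [left; reflexivity | split; [exact Px |]].
    intros y [<-|Hy] Py; [lra | exfalso; apply HL; eauto].
Qed.

Lemma is_ch_integral (r c d e : R) :
  is_ch r c d e ->
  exists zc zd ze : Z, c = IZR zc /\ d = c / 2 + IZR zd /\ e = IZR ze / 6.
Proof.
  intros (a0 & a1 & a2 & a3 & _ & Hc & Hd & He).
  exists (a1 + 2 * a2 + 3 * a3)%Z, (a2 + 3 * a3)%Z, (a1 + 8 * a2 + 27 * a3)%Z.
  rewrite !plus_IZR, !mult_IZR; lra.
Qed.

(* [(r, c, x, y)] are the coordinates in the basis [ch O, ch O_H, ch O_L, ch O_pt],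
   with [H] a plane, [L] a line and [pt] a point of [P^3]. *)
Lemma is_ch_of_linear_subspaces (r c x y : Z) :
  is_ch (IZR r) (IZR c) (IZR x - IZR c / 2) (IZR c / 6 - IZR x + IZR y).
Proof.
  exists (r - 3 * c + 3 * x - y)%Z, (6 * c - 8 * x + 3 * y)%Z,
    (7 * x - 4 * c - 3 * y)%Z, (c - 2 * x + y)%Z.
  rewrite !minus_IZR, !plus_IZR, !minus_IZR, !mult_IZR.
  repeat split; field.
Qed.

Lemma Rmin_sqr_le (d D : R) :
  0 <= d <= D -> Rmin (4 * d ^ 2) (4 * (D - d) ^ 2) <= D ^ 2.
Proof.
  intros Hd; destruct (Rle_dec d (D / 2)).
  - eapply Rle_trans; [apply Rmin_l | nra].
  - eapply Rle_trans; [apply Rmin_r | nra].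
Qed.

Lemma numerical_wall_lattice (Rk D r c d e : R) :
  numerical_wall Rk D r c d e ->
  exists zc ze : Z, c = IZR zc /\ e = IZR ze / 6 /\
    (1 <= zc)%Z /\ (1 <= ze)%Z /\ c * (6 * e) <= D ^ 2.
Proof.
  intros (Hch & Hc & Hd & [Hce0 Hce] & _).
  destruct (is_ch_integral _ _ _ _ Hch) as (zc & _ & ze & -> & _ & ->).
  exists zc, ze; repeat split; try reflexivity.
  - apply lt_IZR in Hc; lia.
  - assert (Hze : 0 < IZR ze) by nra.
    apply lt_IZR in Hze; lia.
  - eapply Rle_trans; [exact Hce | apply Rmin_sqr_le; lra].
Qed.

Lemma sqrt_div_le (x c D : R) :
  1 <= c -> 0 <= x -> c * x <= D ^ 2 -> 0 <= D -> sqrt (x / c) <= D.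
Proof.
  intros Hc Hx HxD HD.
  rewrite <- (sqrt_pow2 D HD); apply sqrt_le_1_alt.
  assert (x / c * c = x) by (field; lra).
  assert (0 <= x / c) by (apply Rmult_le_pos; [lra | left; apply Rinv_0_lt_compat; lra]).
  nra.
Qed.

Lemma wall_alpha0_le (Rk D r c d e : R) :
  numerical_wall Rk D r c d e -> wall_alpha0 c e <= D.
Proof.
  intros W.
  destruct (numerical_wall_lattice _ _ _ _ _ _ W) as (zc & ze & Hc & He & Hzc & Hze & HceD).
  destruct W as (_ & _ & Hd & _).
  apply sqrt_div_le; try lra.
  - rewrite Hc; apply IZR_le; exact Hzc.
  - rewrite He; apply IZR_le in Hze; lra.
Qed.

Definition wall_candidates (N : nat) : list (R * R) :=
  map (fun k => (INR (fst k), INR (snd k) / 6)) (list_prod (seq 1 N) (seq 1 N)).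

Lemma In_wall_candidates (N : nat) (zc ze : Z) :
  (1 <= zc <= Z.of_nat N)%Z -> (1 <= ze <= Z.of_nat N)%Z ->
  In (IZR zc, IZR ze / 6) (wall_candidates N).
Proof.
  intros Hc He; apply in_map_iff; exists (Z.to_nat zc, Z.to_nat ze); split.
  - cbn [fst snd]; rewrite !INR_IZR_INZ, !Z2Nat.id by lia; reflexivity.
  - apply in_prod; apply in_seq; lia.
Qed.

Lemma numerical_wall_in_candidates (Rk : R) (n : Z) (r c d e : R) :
  numerical_wall Rk (IZR n) r c d e ->
  In (c, e) (wall_candidates (Z.to_nat (n * n))).
Proof.
  intros W.
  destruct (numerical_wall_lattice _ _ _ _ _ _ W) as (zc & ze & -> & -> & Hzc & Hze & HceD).
  replace (IZR zc * (6 * (IZR ze / 6))) with (IZR (zc * ze)) in HceD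
    by (rewrite mult_IZR; field).
  replace (IZR n ^ 2) with (IZR (n * n)) in HceD by (rewrite mult_IZR; ring).
  apply le_IZR in HceD.
  apply In_wall_candidates; rewrite Z2Nat.id; nia.
Qed.

Lemma ex_max_numerical_wall (Rk : R) (n : Z) :
  (exists r c d e, numerical_wall Rk (IZR n) r c d e) ->
  exists r c d e, numerical_wall Rk (IZR n) r c d e /\
    forall r' c' d' e', numerical_wall Rk (IZR n) r' c' d' e' ->
      wall_alpha0 c' e' <= wall_alpha0 c e.
Proof.
  intros (r0 & c0 & d0 & e0 & W0).
  set (P := fun ce : R * R => exists r d, numerical_wall Rk (IZR n) r (fst ce) d (snd ce)).
  destruct (ex_argmax_in_list P (fun ce => wall_alpha0 (fst ce) (snd ce))
              (wall_candidates (Z.to_nat (n * n))))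
    as ([c e] & _ & (r & d & W) & Hmax).
  { exists (c0, e0); split; [exact (numerical_wall_in_candidates _ _ _ _ _ _ W0) |].
    exists r0, d0; exact W0. }
  exists r, c, d, e; split; [exact W |].
  intros r' c' d' e' W'.
  apply (Hmax (c', e')); [exact (numerical_wall_in_candidates _ _ _ _ _ _ W') |].
  exists r', d'; exact W'.
Qed.

Lemma numerical_wall_half_integer (Rk : R) (n p q : Z) :
  0 <= Rk -> (0 <= p)%Z -> (2 * p + 1 <= n)%Z -> (0 <= q)%Z ->
  (6 * q <= 4 * p * (p + 1))%Z ->
  numerical_wall Rk (IZR n) 0 1 (IZR p + 1 / 2) (1 / 6 + IZR q).
Proof.
  intros HR Hp Hn Hq Hpq.
  apply IZR_le in Hp, Hn, Hq, Hpq.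
  rewrite plus_IZR, mult_IZR in Hn; rewrite !mult_IZR, plus_IZR in Hpq.
  split; [| split; [| split; [| split; [split | split]]]].
  - replace 0 with (IZR 0) by reflexivity.
    replace (IZR p + 1 / 2) with (IZR (p + 1) - IZR 1 / 2) by (rewrite plus_IZR; field).
    replace (1 / 6 + IZR q) with (IZR 1 / 6 - IZR (p + 1) + IZR (q + p + 1))
      by (rewrite !plus_IZR; field).
    apply is_ch_of_linear_subspaces.
  - lra.
  - split; lra.
  - lra.
  - apply Rmin_glb; nra.
  - assert (0 <= (2 * IZR n - 2 * (IZR p + 1 / 2)) / (6 * (1 / 6 + IZR q)))
      by (apply Rmult_le_pos; [lra | left; apply Rinv_0_lt_compat; lra]).
    unfold Rdiv in *; lra.
  - apply Rmult_le_pos; [lra | left; apply Rinv_0_lt_compat; lra].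
Qed.

Lemma lt_sqrt_of_sqr_lt (a x : R) : 0 <= a -> a ^ 2 < x -> a < sqrt x.
Proof.
  intros Ha Hax; rewrite <- (sqrt_pow2 a Ha).
  apply sqrt_lt_1_alt; split; [apply pow2_ge_0 | exact Hax].
Qed.

Lemma exists_wall_alpha0_gt (Rk : R) (n : Z) :
  0 <= Rk -> (1 <= n)%Z ->
  exists r c d e, numerical_wall Rk (IZR n) r c d e /\ IZR n - 2 < wall_alpha0 c e.
Proof.
  intros HR Hn.
  set (p := ((n - 1) / 2)%Z).
  set (q := (2 * p * (p + 1) / 3)%Z).
  assert (Hp : (0 <= p /\ 2 * p + 1 <= n <= 2 * p + 2)%Z)
    by (unfold p; Z.div_mod_to_equations; lia).
  assert (Hq : (0 <= q /\ 3 * q <= 2 * p * (p + 1) < 3 * q + 3)%Z)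
    by (unfold q; Z.div_mod_to_equations; nia).
  exists 0, 1, (IZR p + 1 / 2), (1 / 6 + IZR q); split.
  { apply numerical_wall_half_integer; [exact HR | lia ..]. }
  unfold wall_alpha0.
  replace (6 * (1 / 6 + IZR q) / 1) with (IZR (1 + 6 * q)) by (rewrite plus_IZR, mult_IZR; field).
  destruct (Z_le_gt_dec n 2) as [Hn2|Hn2].
  - apply IZR_le in Hn2.
    assert (0 < sqrt (IZR (1 + 6 * q))) by (apply sqrt_lt_R0, IZR_lt; lia).
    lra.
  - apply lt_sqrt_of_sqr_lt.
    + assert (2 < IZR n) by (apply IZR_lt; lia); lra.
    + replace ((IZR n - 2) ^ 2) with (IZR ((n - 2) * (n - 2)))
        by (rewrite mult_IZR, minus_IZR; ring).
      apply IZR_lt; nia.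
Qed.

Theorem proposition4p1 (Rk D : R) :
  is_ch (- Rk) 0 D 0 -> 0 <= Rk -> 0 < D ->
  exists alpha_inf : R,
    ((exists r c d e, numerical_wall Rk D r c d e /\ wall_alpha0 c e = alpha_inf) /\
     (forall r c d e, numerical_wall Rk D r c d e -> wall_alpha0 c e <= alpha_inf)) /\
    D - 2 < alpha_inf <= D.
Proof.
  intros Hch HR HD.
  destruct (is_ch_integral _ _ _ _ Hch) as (_ & n & _ & _ & HDn & _).
  replace (0 / 2 + IZR n) with (IZR n) in HDn by field; subst D.
  assert (Hn : (1 <= n)%Z) by (apply lt_IZR in HD; lia).
  destruct (exists_wall_alpha0_gt Rk n HR Hn) as (r0 & c0 & d0 & e0 & W0 & Hgt).
  destruct (ex_max_numerical_wall Rk n) as (r & c & d & e & W & Hmax); [eauto |].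
  exists (wall_alpha0 c e); split; [split | split].
  - exists r, c, d, e; split; [exact W | reflexivity].
  - exact Hmax.
  - specialize (Hmax _ _ _ _ W0); lra.
  - exact (wall_alpha0_le _ _ _ _ _ _ W).
Qed.
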